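(* Let $\Omega$ be a commutative adic $\mathbb{Z}_\ell$-algebra, $\mathbb{F}$ a finite field, $k$ an integer prime to $\ell$, and $\gamma$ the image of the geometric Frobenius $\mathrm{Frob}_{\mathbb{F}}$ in $\Gamma_{k\ell^\infty}$. Let $P=\{f(T)\in\Omega[T]:f(0)\in\Omega^\times\}$ and $S=\{f\in\Omega[[\Gamma_{k\ell^\infty}]]:$ the image of $f$ in $\Omega/\mathrm{Jac}(\Omega)[[\Gamma_{k\ell^\infty}]]$ is a nonzerodivisor$\}$. Then the ring homomorphism $\Omega[T]\to\Omega[[\Gamma_{k\ell^\infty}]]$, $T\mapsto\gamma^{-1}$, maps $P$ into $S$.
   Context: Adic ring $\Omega$: $\mathrm{Jac}(\Omega)^n$ has finite index for all $n\ge1$ and $\Omega=\varprojlim\Omega/\mathrm{Jac}(\Omega)^n$. With $q=|\mathbb{F}|$, $\Gamma_{k\ell^\infty}=\mathrm{Gal}(\bigcup_n\mathbb{F}_{q^{k\ell^n}}/\mathbb{F})\cong\mathbb{Z}/k\times\mathbb{Z}_\ell$; $\mathrm{Frob}_{\mathbb{F}}$ is the automorphism $x\mapsto x^{1/q}$. $\Omega[[\Gamma]]=\varprojlim_{J,U}\Omega/J[\Gamma/U]$. *)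

From HB Require Import structures.
From mathcomp Require Import all_boot all_order all_algebra.
Set Implicit Arguments. Unset Strict Implicit. Unset Printing Implicit Defensive.
Import GRing.Theory.
Local Open Scope ring_scope.

Section Ring.
Variable Omega : comNzRingType.

Definition is_unit (x : Omega) : Prop := exists y : Omega, y * x = 1.

(* Jacobson radical of a commutative ring: x \in Jac iff 1 - x y is a unit
   for every y (equivalently, x lies in every maximal ideal). *)
Definition jac (x : Omega) : Prop := forall y : Omega, is_unit (1 - x * y).

(* x \in Jac(Omega)^n : x is a finite sum of terms r * j_1 * ... * j_n with
   all j_i in Jac(Omega) (for n = 0 this is all of Omega). *)
Definition jacpow (n : nat) (x : Omega) : Prop :=
  exists s : seq (Omega * n.-tuple Omega),
    (forall p, p \in s -> forall i : 'I_n, jac (tnth p.2 i)) /\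
    x = \sum_(p <- s) p.1 * \prod_(i < n) tnth p.2 i.

Definition jacpow_finite_index (n : nat) : Prop :=
  exists s : seq Omega, forall x : Omega, exists2 y, y \in s & jacpow n (x - y).

Definition jac_separated : Prop :=
  forall x : Omega, (forall n, jacpow n x) -> x = 0.

(* Omega -> lim_n Omega/Jac^n is surjective: a compatible system of classes
   (given by lifts u n of the class in Omega/Jac^n) comes from some x. *)
Definition jac_complete : Prop :=
  forall u : nat -> Omega, (forall n, jacpow n (u n.+1 - u n)) ->
    exists x : Omega, forall n, jacpow n (x - u n).

Definition adic : Prop :=
  (forall n, (1 <= n)%N -> jacpow_finite_index n) /\ jac_separated /\ jac_complete.

(* Z_l-algebra structure on an adic ring: l is topologically nilpotent,
   i.e. l \in Jac(Omega). *)
Definition Zl_algebra (l : nat) : Prop := jac (l%:R).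

End Ring.

(* Completed group rings of Gamma = Z/k x Z_l.                              *)
(* Open subgroups U_n = 0 x l^n Z_l and open ideals Jac^m are cofinal, so    *)
(*   Omega[[Gamma]] = lim_{m,n} (Omega/Jac^m)[Z/k x Z/l^n].                 *)
(* An element of (Omega/J)[Z/k x Z/l^n] is represented by a function        *)
(* 'I_k -> 'I_(l^n) -> Omega (coefficient of the group element (a,b)),      *)
(* taken modulo J.                                                          *)
Section GroupRing.
Variables (Omega : comNzRingType) (l k : nat).

Definition OGfam := forall m n : nat, 'I_k -> 'I_(l ^ n) -> Omega.

Definition proj_level (n n' : nat) (g : 'I_k -> 'I_(l ^ n) -> Omega)
    (a : 'I_k) (b' : 'I_(l ^ n')) : Omega :=
  \sum_(b : 'I_(l ^ n) | (b %% l ^ n' == b')%N) g a b.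

Definition in_OG (F : OGfam) : Prop :=
  forall m m' n n' : nat, (m' <= m)%N -> (n' <= n)%N ->
    forall (a : 'I_k) (b' : 'I_(l ^ n')),
      jacpow m' (F m' n' a b' - @proj_level n n' (F m n) a b').

(* (Omega/Jac)[[Gamma]] = lim_n (Omega/Jac)[Z/k x Z/l^n]  (Omega/Jac finite) *)
Definition redfam := forall n : nat, 'I_k -> 'I_(l ^ n) -> Omega.

Definition in_redOG (g : redfam) : Prop :=
  forall n n' : nat, (n' <= n)%N -> forall (a : 'I_k) (b' : 'I_(l ^ n')),
    jac (g n' a b' - @proj_level n n' (g n) a b').

(* reduction map Omega[[Gamma]] -> (Omega/Jac)[[Gamma]] (Jac^1 = Jac) *)
Definition reduce (F : OGfam) : redfam := fun n => F 1%N n.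

Definition redmul (g h : redfam) : redfam := fun n c1 c2 =>
  \sum_(a1 : 'I_k) \sum_(b1 : 'I_k | ((a1 + b1) %% k == c1)%N)
  \sum_(a2 : 'I_(l ^ n)) \sum_(b2 : 'I_(l ^ n) | ((a2 + b2) %% l ^ n == c2)%N)
     g n a1 a2 * h n b1 b2.

Definition red_is0 (h : redfam) : Prop := forall n a b, jac (h n a b).

Definition red_nzd (g : redfam) : Prop :=
  forall h : redfam, in_redOG h -> red_is0 (redmul g h) -> red_is0 h.

Definition inS (F : OGfam) : Prop := in_OG F /\ red_nzd (reduce F).

Definition inP (f : {poly Omega}) : Prop := is_unit f`_0.

(* Under Gal(\bigcup_n F_{q^{k l^n}} / F) ~= Z/k x Z_l (arithmetic Frobenius
   x |-> x^q  |->  (1,1)), the geometric Frobenius gamma is (-1,-1), so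
   gamma^{-1} = (1,1) and gamma^{-i} has image (i mod k, i mod l^n) in
   Z/k x Z/l^n.  The ring map Omega[T] -> Omega[[Gamma]], T |-> gamma^{-1},
   sends f = \sum_i f_i T^i to the family below (independent of m). *)
Definition evalT (f : {poly Omega}) : OGfam := fun m n a b =>
  \sum_(i < size f | ((i %% k == a) && (i %% l ^ n == b))%N) f`_i.

End GroupRing.
Arguments proj_level : clear implicits.

(* Modulo Jac(Omega) everything happens in the reduced ring R = Omega/Jac(Omega), which has
   characteristic l because l lies in Jac(Omega).  At
   level n, T |-> gamma^-1 identifies R[T]/(T^(k l^n) - 1) with R[Z/k x Z/l^n] (Chinese
   remainders, k prime to l), so a class killed by f at level N is represented by some H
   with T^(k l^N) - 1 = (T^k - 1)^(l^N) dividing f H.  Multiplying by a cofactor of the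
   norm F(T^k) of f (the determinant of multiplication by f on the free R[T^k]-module
   R[T]) and splitting H into its multisections mod k reduces this to (T - 1)^(l^N)
   dividing F(T) H_r(T), with F(0) = f(0)^k a unit.  After T |-> T + 1 the low
   coefficients of the shifted H_r vanish one at a time because R is reduced, so for
   l^N >= l^n + deg F each H_r is divisible by (T - 1)^(l^n): H is zero at level n. *)

From HB Require Import structures.
From mathcomp Require Import all_boot all_order all_algebra.
From mathcomp Require Import ring_quotient generic_quotient ring.
From Stdlib Require Import ClassicalDescription.
Set Implicit Arguments. Unset Strict Implicit. Unset Printing Implicit Defensive.
Import GRing.Theory.
Local Open Scope ring_scope.

Section ReducedPoly.
Variable R : comNzRingType.
Hypothesis Rreduced : forall (x : R) n, x ^+ n = 0 -> x = 0.
Implicit Types F G P Q W : {poly R}.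

(* (G Q)_(i+j) = \sum_(t <= j) G_(j-t) Q_(i+t); after multiplying by Q_i^j, every
   term with t > 0 vanishes by induction on j. *)
Lemma coef_mul_expr_eq0 G Q L i :
  (forall j, (j < L)%N -> (G * Q)`_j = 0) -> (forall j, (j < i)%N -> Q`_j = 0) ->
  (i + size G <= L)%N ->
  forall j, (j < size G)%N -> G`_j * Q`_i ^+ j.+1 = 0.
Proof.
move=> hGQ hQ hL; elim/ltn_ind => j IH hj.
have coefGQ : (G * Q)`_(i + j) = \sum_(t < j.+1) G`_(j - t) * Q`_(t + i).
  rewrite coefMr -(big_mkord xpredT (fun s => G`_(i + j - s) * Q`_s)).
  have hi : (i <= (i + j).+1)%N by rewrite ltnW // ltnS leq_addr.
  rewrite (big_cat_nat (leq0n i) hi) /= big1_seq ?add0r; last first.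
    by move=> s /andP [_]; rewrite mem_index_iota => /andP [_ /hQ ->]; rewrite mulr0.
  rewrite -{1}(add0n i) big_addn -addnS addKn big_mkord.
  by apply: eq_bigr => t _; rewrite (addnC t i) subnDl.
have : (G * Q)`_(i + j) * Q`_i ^+ j = 0.
  by rewrite hGQ ?mul0r // (leq_trans _ hL) // ltn_add2l.
rewrite coefGQ big_ord_recl subn0 add0n mulrDl.
rewrite -mulrA -exprS big_distrl /= big1 ?addr0 // => t _.
rewrite /bump /= add1n; set u := (j - t.+1)%N.
have u_lt_j : (u < j)%N by rewrite ltn_subrL /=; case: j {IH hj coefGQ u} t => [[]|].
rewrite [Q`_i ^+ j](_ : _ = Q`_i ^+ u.+1 * Q`_i ^+ (j - u.+1)); last first.
  by rewrite -exprD subnKC.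
by rewrite -mulrA [Q`_(_ + i) * _]mulrCA (mulrA G`_u) IH ?mul0r // (ltn_trans u_lt_j hj).
Qed.

(* Summing the previous identities with signs gives G(-1) Q_i^(size G) = 0. *)
Lemma coef_eq0_mulXn G Q L :
  is_unit G.[-1] -> (forall j, (j < L)%N -> (G * Q)`_j = 0) ->
  forall i, (i + size G <= L)%N -> Q`_i = 0.
Proof.
move=> [y hy] hGQ; elim/ltn_ind => i IH hi.
have hQ j : (j < i)%N -> Q`_j = 0.
  by move=> hj; apply: IH => //; rewrite (leq_trans _ hi) // leq_add2r ltnW.
apply: (Rreduced (n := size G)).
rewrite -[LHS]mul1r -hy -mulrA horner_coef mulr_suml big1 ?mulr0 // => j _.
rewrite [Q`_i ^+ _](_ : _ = Q`_i ^+ j.+1 * Q`_i ^+ (size G - j.+1)).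
  2: by rewrite -exprD subnKC.
have -> : G`_j * (-1) ^+ j * (Q`_i ^+ j.+1 * Q`_i ^+ (size G - j.+1))
  = (G`_j * Q`_i ^+ j.+1) * ((-1) ^+ j * Q`_i ^+ (size G - j.+1)) by ring.
by rewrite (coef_mul_expr_eq0 hGQ hQ hi) ?mul0r.
Qed.

Lemma mul_XsubC1_cancel F P W L L' :
  is_unit F`_0 -> F * P = W * ('X - 1) ^+ L -> (L' + size F <= L)%N ->
  exists W', P = W' * ('X - 1) ^+ L'.
Proof.
move=> hF eFP hL.
pose G := F \Po ('X + 1%:P); pose Q := P \Po ('X + 1%:P).
have sizeG : (size G <= size F)%N.
  rewrite /G; have [->|nz] := eqVneq F 0; first by rewrite comp_poly0 size_poly0.
  rewrite (leq_trans (size_comp_poly_leq _ _)) // size_XaddC muln1 prednK //.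
  by rewrite size_poly_gt0.
have G_m1 : G.[-1] = F`_0.
  by rewrite /G horner_comp hornerD hornerX hornerC addNr horner_coef0.
have eGQ : G * Q = (W \Po ('X + 1%:P)) * 'X^L.
  rewrite /G /Q -comp_polyM eFP comp_polyM rmorphXn /= comp_polyB comp_polyX comp_polyC.
  by rewrite addrK.
have Q_low i : (i < L')%N -> Q`_i = 0.
  move=> hi; apply: (@coef_eq0_mulXn G Q L); first by rewrite G_m1.
    by move=> j hj; rewrite eGQ coefMXn hj.
  by rewrite (leq_trans _ hL) // leq_add // ltnW.
exists (drop_poly L' Q \Po ('X - 1%:P)).
have eQ : Q = drop_poly L' Q * 'X^L'.
  rewrite -{1}(poly_take_drop L' Q) [take_poly _ _](_ : _ = 0) ?add0r //.
  by apply/polyP => i; rewrite coef_take_poly coef0; case: ifP => // /Q_low.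
have eP : P = Q \Po ('X - 1%:P) by rewrite /Q comp_polyXaddC_K.
by rewrite {1}eP {1}eQ comp_polyM comp_Xn_poly polyC1.
Qed.

End ReducedPoly.

Section Multisection.
Variable R : comNzRingType.
Variable k : nat.
Hypothesis k_gt0 : (0 < k)%N.
Implicit Types (p : {poly R}) (w : 'I_k -> {poly R}).

Definition multisect p (r : nat) : {poly R} := \poly_(j < size p) p`_(j * k + r).

Definition multisect_sum w : {poly R} := \sum_(r < k) 'X^r * (w r \Po 'X^k).

Definition modk (i : nat) : 'I_k := Ordinal (ltn_pmod i k_gt0).

Lemma coef_multisect_sum w i : (multisect_sum w)`_i = (w (modk i))`_(i %/ k).
Proof.
rewrite /multisect_sum coef_sum (bigD1 (modk i)) //= big1 ?addr0.
  rewrite coefXnM ltnNge leq_mod /= coef_comp_poly_Xn //.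
  have -> : (i - i %% k = i %/ k * k)%N by rewrite {1}(divn_eq i k) addnK.
  by rewrite dvdn_mull // mulnK.
move=> r hr; rewrite coefXnM; case: ltnP => // hri.
rewrite coef_comp_poly_Xn //; case: ifP => // hd; exfalso.
move/eqP: hr; apply; apply/val_inj => /=.
have -> : i = ((i - r) %/ k * k + r)%N by rewrite divnK // subnK.
by rewrite modnMDl modn_small.
Qed.

Lemma multisectK p : multisect_sum (multisect p) = p.
Proof.
apply/polyP => i; rewrite coef_multisect_sum /multisect coef_poly /=.
case: ltnP => h; first by rewrite -divn_eq.
by rewrite nth_default // (leq_trans h) // leq_div.
Qed.

Lemma multisect_sum_inj w w' : multisect_sum w = multisect_sum w' -> w =1 w'.
Proof.
move=> e r; apply/polyP => j.
have hr : modk (j * k + r) = r by apply/val_inj; rewrite /= modnMDl modn_small.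
have hq : ((j * k + r) %/ k = j)%N by rewrite divnMDl // divn_small // addn0.
by have := congr1 (fun p => p`_(j * k + r)) e; rewrite /= !coef_multisect_sum hr hq.
Qed.

Lemma eq_multisect_sum w w' : w =1 w' -> multisect_sum w = multisect_sum w'.
Proof. by move=> e; apply: eq_bigr => r _; rewrite e. Qed.

Lemma multisect_sumMl (c : {poly R}) w :
  (c \Po 'X^k) * multisect_sum w = multisect_sum (fun r => c * w r).
Proof.
by rewrite /multisect_sum big_distrr; apply: eq_bigr => r _; rewrite comp_polyM mulrCA.
Qed.

Lemma multisect_sumMr (c : {poly R}) w :
  multisect_sum w * (c \Po 'X^k) = multisect_sum (fun r => w r * c).
Proof.
by rewrite /multisect_sum big_distrl; apply: eq_bigr => r _; rewrite comp_polyM mulrA.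
Qed.

(* The matrix of multiplication by [p] on the free [R[X^k]]-module [R[X]] with basis
   [1, X, ..., X^(k-1)], written in the variable [Y = X^k]. *)
Definition multisect_mx p : 'M[{poly R}]_k :=
  \matrix_(t, s) (if (s <= t)%N then multisect p (t - s) else 'X * multisect p (t + k - s)).

Lemma multisect_termM p q (r s : 'I_k) :
  'X^r * (multisect p r \Po 'X^k) * ('X^s * (q \Po 'X^k))
  = 'X^(modk (r + s)) * ((multisect_mx p (modk (r + s)) s * q) \Po 'X^k).
Proof.
rewrite mxE /=; case: (ltnP (r + s) k) => hrs.
  by rewrite modn_small // leq_addl addnK comp_polyM exprD; ring.
have -> : ((r + s) %% k = r + s - k)%N.
  rewrite -{1}(subnK hrs) modnDr modn_small // ltn_subLR //.
  by rewrite -addSn leq_add // ltnW.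
have -> : (s <= r + s - k)%N = false.
  by apply/negbTE; rewrite -ltnNge ltn_subLR // ltn_add2r.
rewrite subnK // addnK !comp_polyM comp_polyX !mulrA -exprD subnK // exprD; ring.
Qed.

Lemma mul_multisect_sum p w :
  p * multisect_sum w = multisect_sum (fun t => \sum_s multisect_mx p t s * w s).
Proof.
rewrite -{1}(multisectK p) /multisect_sum big_distrl /=.
under eq_bigr do rewrite big_distrr /=.
under [RHS]eq_bigr do rewrite rmorph_sum big_distrr /=.
rewrite exchange_big [RHS]exchange_big /=; apply: eq_bigr => s _.
have shift_inj : injective (fun r : 'I_k => modk (r + s)).
  move=> r1 r2 /(congr1 val) /= /eqP; rewrite eqn_modDr !modn_small // => /eqP e.
  exact: val_inj.
rewrite [RHS](reindex_inj shift_inj) /=.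
by apply: eq_bigr => r _; rewrite multisect_termM.
Qed.

(* [F] is the determinant of [multisect_mx f]; the cofactor comes from its adjugate. *)
Lemma norm_multisect_exists (f : {poly R}) :
  exists F fs : {poly R}, fs * f = F \Po 'X^k /\ F`_0 = f`_0 ^+ k.
Proof.
pose A := multisect_mx f; pose i0 : 'I_k := Ordinal k_gt0.
exists (\det A), (multisect_sum (fun t => \adj A t i0)); split.
  rewrite mulrC mul_multisect_sum.
  rewrite (@eq_multisect_sum _ (fun t => (\det A) *+ (t == i0))); last first.
    by move=> t; have /matrixP/(_ t i0) := mul_mx_adj A; rewrite !mxE.
  rewrite /multisect_sum (bigD1 i0) //= mulr1n expr0 mul1r big1 ?addr0 // => r hr.
  by rewrite (negbTE hr) mulr0n comp_polyC polyC0 mulr0.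
rewrite -horner_coef0 -horner_evalE -det_map_mx det_trig.
  rewrite (eq_bigr (fun _ => f`_0)) ?prodr_const ?card_ord // => i _.
  rewrite /A !mxE /= leqnn subnn horner_evalE horner_coef0 /multisect coef_poly.
  by case: ifP => // /negbT; rewrite -leqNgt => hs; rewrite nth_default.
apply/is_trig_mxP => i j hij; rewrite /A !mxE /= leqNgt hij /=.
by rewrite horner_evalE hornerM hornerX mul0r.
Qed.

End Multisection.

Section PcharPoly.
Variable R : comNzRingType.
Variables l k : nat.
Hypothesis pchar_l : l \in [pchar R].
Hypothesis k_gt0 : (0 < k)%N.
Hypothesis Rreduced : forall (x : R) n, x ^+ n = 0 -> x = 0.

Lemma Xnsub1_expn_pchar N : ('X^k - 1 : {poly R}) ^+ (l ^ N) = 'X^(k * l ^ N) - 1.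
Proof.
have pchar_poly_l : l \in [pchar {poly R}] by rewrite pchar_poly.
have lN_pchar : (GRing.pchar {poly R}).-nat (l ^ N)%N.
  by rewrite pnatX pnatE ?pchar_poly_l //; case/andP: pchar_l.
by rewrite exprDn_pchar // exprNn_pchar // expr1n exprM.
Qed.

Lemma Xnsub1_comp N : (('X - 1) ^+ (l ^ N) \Po 'X^k : {poly R}) = 'X^(k * l ^ N) - 1.
Proof.
by rewrite rmorphXn /= comp_polyB comp_polyX comp_polyC polyC1 Xnsub1_expn_pchar.
Qed.

(* [N := n + size F] for the norm [F] of [f], so that [l ^ N >= l ^ n + size F]. *)
Lemma mul_Xnsub1_cancel (f : {poly R}) n : is_unit f`_0 ->
  exists2 N, (n <= N)%N & forall H Q : {poly R},
    f * H = Q * ('X^(k * l ^ N) - 1) -> exists Q', H = Q' * ('X^(k * l ^ n) - 1).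
Proof.
move=> [y hy].
have [F [fs [eF F0]]] := norm_multisect_exists k_gt0 f.
have l_gt1 : (1 < l)%N by case/andP: pchar_l => /prime_gt1.
exists (n + size F)%N; first exact: leq_addr.
move=> H Q eHQ.
have eFH : (F \Po 'X^k) * H = (fs * Q) * (('X - 1) ^+ (l ^ (n + size F)) \Po 'X^k).
  by rewrite -eF -[LHS]mulrA eHQ -[RHS]mulrA Xnsub1_comp.
rewrite -(multisectK k_gt0 H) -(multisectK k_gt0 (fs * Q)) in eFH.
rewrite multisect_sumMl multisect_sumMr in eFH.
have F0_unit : is_unit F`_0 by exists (y ^+ k); rewrite F0 -exprMn hy expr1n.
have degF : (l ^ n + size F <= l ^ (n + size F))%N.
  rewrite expnD (leq_trans _ (leq_mul (leqnn (l ^ n)) (ltn_expl (size F) l_gt1))) //.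
  by rewrite mulnS leq_add2l leq_pmull // expn_gt0 ltnW.
have sect_dvd (r : 'I_k) : exists W, multisect k H r = W * ('X - 1) ^+ (l ^ n).
  exact: (mul_XsubC1_cancel Rreduced F0_unit (multisect_sum_inj k_gt0 eFH r)).
have [W eW] := fin_all_exists sect_dvd.
exists (multisect_sum W).
by rewrite -(multisectK k_gt0 H) (eq_multisect_sum eW) -multisect_sumMr Xnsub1_comp.
Qed.

End PcharPoly.

Section ModConvolution.
Variable R : comNzRingType.

(* Convolution commutes with reducing exponents mod [M]. *)
Lemma big_mod_conv (M B B' c : nat) (P : pred nat) (Q : nat -> nat -> bool)
    (G : nat -> nat -> R) : (0 < M)%N ->
  \sum_(x < M) \sum_(y < M | ((x + y) %% M == c)%N)
     \sum_(s < B | P s && (s %% M == x)%N) \sum_(t < B' | Q s t && (t %% M == y)%N) G s t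
  = \sum_(s < B | P s) \sum_(t < B' | ((s + t) %% M == c)%N && Q s t) G s t.
Proof.
move=> M_gt0.
pose rm n (i : 'I_n) : 'I_M := Ordinal (ltn_pmod i M_gt0).
have rmE n (i : 'I_n) (x : 'I_M) : (rm n i == x) = (i %% M == x)%N by rewrite -val_eqE.
rewrite [RHS](partition_big (rm B) xpredT) //=; apply: eq_bigr => x _.
under [RHS]eq_bigl do rewrite rmE.
rewrite exchange_big /=; apply: eq_bigr => s /andP [_ /eqP sx].
rewrite (partition_big (rm B') xpredT) //= big_mkcond /=.
apply: eq_bigr => y _; case: ifP => xy.
  apply: eq_bigl => t; rewrite rmE; case ty: (t %% M == y)%N; rewrite ?andbT ?andbF //.
  by rewrite -modnDm sx (eqP ty) xy.
rewrite big1 // => t /andP [/andP [st _] /eqP ty].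
by move: st; rewrite -modnDm sx -[(t %% M)%N]/(val (rm B' t)) ty xy.
Qed.

End ModConvolution.

Section Redmul.
Variables (R : comNzRingType) (l k : nat).

Lemma redmul_ext (g g' h h' : redfam R l k) N :
  g N =2 g' N -> h N =2 h' N -> @redmul R l k g h N =2 @redmul R l k g' h' N.
Proof.
by move=> eg eh c1 c2; rewrite /redmul; do 4 (apply: eq_bigr => ? _); rewrite eg eh.
Qed.

Lemma redmul0r (g h : redfam R l k) N :
  h N =2 (fun _ _ => 0) -> @redmul R l k g h N =2 (fun _ _ => 0).
Proof.
by move=> eh c1 c2; rewrite /redmul; do 4 (apply: big1 => ? _); rewrite eh mulr0.
Qed.

End Redmul.

Section EvalT.
Variable R : comNzRingType.
Variables l k : nat.
Hypothesis k_gt0 : (0 < k)%N.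
Hypothesis l_gt0 : (0 < l)%N.
Implicit Types p q : {poly R}.

Lemma big_coef_widen p B (P : pred nat) : (size p <= B)%N ->
  \sum_(i < size p | P i) p`_i = \sum_(i < B | P i) p`_i.
Proof.
move=> hB; rewrite (big_ord_widen_cond _ _ _ hB) big_mkcond [RHS]big_mkcond.
apply: eq_bigr => i _; case: (P i) => //=; case: ltnP => //= h.
by rewrite nth_default.
Qed.

Lemma evalT_widen p B m N a b : (size p <= B)%N ->
  @evalT R l k p m N a b = \sum_(i < B | ((i %% k == a) && (i %% l ^ N == b))%N) p`_i.
Proof.
move=> hB; rewrite /evalT.
exact: (@big_coef_widen _ _ (fun i => (i %% k == a) && (i %% l ^ N == b))%N hB).
Qed.

Lemma coefM_big_ord p q i :
  (p * q)`_i = \sum_(s < size p) \sum_(t < size q) p`_s * q`_t * (i == s + t)%N%:R.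
Proof.
rewrite -{1}(coefK p) -{1}(coefK q) !poly_def big_distrlr /= coef_sum.
apply: eq_bigr => s _; rewrite coef_sum; apply: eq_bigr => t _.
by rewrite -scalerAl -scalerAr scalerA -exprD coefZ coefXn.
Qed.

Lemma big_ord_mul_eqn B (C : pred nat) (x : R) j : (j < B)%N ->
  \sum_(i < B | C i) x * (i == j :> nat)%:R = if C j then x else 0.
Proof.
move=> hj; rewrite big_mkcond (bigD1 (Ordinal hj)) //= eqxx mulr1 big1 ?addr0.
  by case: (C j).
move=> i hi; case: (C i) => //.
suff -> : (i == j :> nat) = false by rewrite mulr0.
by apply/negbTE; apply: contra hi => /eqP e; apply/eqP/val_inj.
Qed.

Lemma evalTM p q m N :
  @evalT R l k (p * q) m N =2 @redmul R l k (@evalT R l k p m) (@evalT R l k q m) N.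
Proof.
move=> c1 c2; have lN_gt0 : (0 < l ^ N)%N by rewrite expn_gt0 l_gt0.
have size_pq : (size (p * q)%R <= size p + size q)%N.
  exact: leq_trans (size_polyMleq _ _) (leq_pred _).
transitivity (\sum_(s < size p) \sum_(t < size q |
    (((s + t) %% k == c1) && ((s + t) %% l ^ N == c2))%N) p`_s * q`_t).
  rewrite (evalT_widen m c1 c2 size_pq); under eq_bigr do rewrite coefM_big_ord.
  rewrite exchange_big; apply: eq_bigr => s _.
  rewrite exchange_big [RHS]big_mkcond; apply: eq_bigr => t _ /=.
  rewrite (@big_ord_mul_eqn _ (fun i => (i %% k == c1) && (i %% l ^ N == c2))%N) //.
  by rewrite -addSn leq_add // ltnW.
rewrite /redmul.
under [RHS]eq_bigr => a1 _ do under eq_bigr => b1 _ do under eq_bigr => a2 _ do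
  under eq_bigr => b2 _ do rewrite /evalT big_distrlr.
under [RHS]eq_bigr => a1 _ do under eq_bigr => b1 _ do rewrite (big_mod_conv _ _ _
  (fun s => s %% k == a1)%N (fun _ t => t %% k == b1)%N (fun s t => p`_s * q`_t) lN_gt0).
symmetry; exact: (big_mod_conv _ _ c1 xpredT (fun s t => (s + t) %% l ^ N == c2)%N
  (fun s t => p`_s * q`_t) k_gt0).
Qed.

Lemma proj_level_evalT p m m' n n' : (n' <= n)%N ->
  proj_level R l k n n' (@evalT R l k p m n) =2 @evalT R l k p m' n'.
Proof.
move=> hn a b'; have ln_gt0 : (0 < l ^ n)%N by rewrite expn_gt0 l_gt0.
have dvd_ln : (l ^ n' %| l ^ n)%N by rewrite dvdn_exp2l.
pose rm (i : 'I_(size p)) : 'I_(l ^ n) := Ordinal (ltn_pmod i ln_gt0).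
rewrite /proj_level /evalT [RHS](partition_big rm xpredT) //= big_mkcond /=.
apply: eq_bigr => b _; case: ifP => hb.
  apply: eq_bigl => i; rewrite -val_eqE /=.
  case: (i %% k == a)%N => //=.
  case ib: (i %% l ^ n == b)%N; rewrite ?andbF ?andbT //.
  by rewrite -(modn_dvdm i dvd_ln) (eqP ib).
rewrite big1 // => i /andP [/andP [_ ib'] /eqP ib].
by move: ib'; rewrite -(modn_dvdm i dvd_ln) -[(i %% l ^ n)%N]/(val (rm i)) ib hb.
Qed.

Lemma evalT_in_OG p : in_OG (@evalT R l k p).
Proof.
move=> m m' n n' _ hn a b'; rewrite (proj_level_evalT p m m' hn) subrr.
by exists [::]; split => //; rewrite big_nil.
Qed.

Lemma evalTB p q m N :
  @evalT R l k (p - q) m N =2 (fun a b => @evalT R l k p m N a b - @evalT R l k q m N a b).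
Proof.
move=> a b; pose B := maxn (size p) (size q).
have size_p : (size p <= B)%N by rewrite leq_maxl.
have size_q : (size q <= B)%N by rewrite leq_maxr.
have size_pq : (size (p - q)%R <= B)%N.
  by rewrite (leq_trans (size_polyD _ _)) // size_polyN.
rewrite /= (evalT_widen m a b size_p) (evalT_widen m a b size_q).
by rewrite (evalT_widen m a b size_pq) -sumrB; apply: eq_bigr => i _; rewrite coefB.
Qed.

Lemma evalT_Xnsub1 m N : @evalT R l k ('X^(k * l ^ N) - 1) m N =2 (fun _ _ => 0).
Proof.
move=> a b; pose C := (fun i => (i %% k == a) && (i %% l ^ N == b))%N.
have size_d : (size ('X^(k * l ^ N) - 1 : {poly R})%R <= (k * l ^ N).+1)%N.
  rewrite (leq_trans (size_polyD _ _)) // size_polyN size_polyXn size_poly1.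
  by rewrite geq_max leqnn.
rewrite (evalT_widen m a b size_d).
have eqn_pick j : (j < (k * l ^ N).+1)%N ->
    \sum_(i < (k * l ^ N).+1 | C i) (i == j :> nat)%:R = if C j then 1 else 0 :> R.
  by move=> hj; rewrite -(big_ord_mul_eqn C 1 hj); apply: eq_bigr => i _; rewrite mul1r.
under eq_bigr do rewrite coefB coefXn coef1.
by rewrite sumrB !eqn_pick // /C modnMr modnMl !mod0n subrr.
Qed.

Lemma evalT_mulXnsub1 q m N :
  @evalT R l k (q * ('X^(k * l ^ N) - 1)) m N =2 (fun _ _ => 0).
Proof. by move=> a b; rewrite evalTM; apply: redmul0r; apply: evalT_Xnsub1. Qed.

Hypothesis coprime_kl : coprime k l.

Lemma eq_crt N i j : (i < k * l ^ N)%N -> (j < k * l ^ N)%N ->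
  (i %% k = j %% k)%N -> (i %% l ^ N = j %% l ^ N)%N -> i = j.
Proof.
move=> hi hj ek el.
have : (i == j %[mod k * l ^ N])%N by rewrite chinese_remainder ?coprimeXr // ek el !eqxx.
by rewrite !modn_small // => /eqP.
Qed.

Lemma crt_exists N a b : (a < k)%N -> (b < l ^ N)%N ->
  exists2 i, (i < k * l ^ N)%N & (i %% k = a)%N /\ (i %% l ^ N = b)%N.
Proof.
move=> ha hb; have co : coprime k (l ^ N) by rewrite coprimeXr.
exists (chinese k (l ^ N) a b %% (k * l ^ N))%N.
  by rewrite ltn_pmod // muln_gt0 k_gt0 expn_gt0 l_gt0.
split.
  by rewrite (modn_dvdm _ (dvdn_mulr _ (dvdnn k))) (chinese_modl co) modn_small.
by rewrite (modn_dvdm _ (dvdn_mull k (dvdnn (l ^ N)))) (chinese_modr co) modn_small.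
Qed.

Lemma big_crt1 N (F : nat -> R) i : (i < k * l ^ N)%N ->
  \sum_(j < k * l ^ N | ((j %% k == i %% k) && (j %% l ^ N == i %% l ^ N))%N) F j = F i.
Proof.
move=> hi; rewrite (bigD1 (Ordinal hi)) /= ?eqxx // big1 ?addr0 //.
move=> j /andP [/andP [/eqP ek /eqP el] ji]; exfalso.
by move/eqP: ji; apply; apply/val_inj; exact: eq_crt (ltn_ord j) hi ek el.
Qed.

Lemma evalT_eq0 p m N : (size p <= k * l ^ N)%N ->
  @evalT R l k p m N =2 (fun _ _ => 0) -> p = 0.
Proof.
move=> size_p p0; apply/polyP => i; rewrite coef0.
have [hi|hi] := ltnP i (k * l ^ N); last by rewrite nth_default // (leq_trans size_p).
have lN_gt0 : (0 < l ^ N)%N by rewrite expn_gt0 l_gt0.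
have := p0 (Ordinal (ltn_pmod i k_gt0)) (Ordinal (ltn_pmod i lN_gt0)).
by rewrite (evalT_widen m _ _ size_p) /= big_crt1.
Qed.

Lemma evalT_surj N (h : 'I_k -> 'I_(l ^ N) -> R) m :
  exists H : {poly R}, @evalT R l k H m N =2 h.
Proof.
have lN_gt0 : (0 < l ^ N)%N by rewrite expn_gt0 l_gt0.
exists (\poly_(i < k * l ^ N) h (Ordinal (ltn_pmod i k_gt0)) (Ordinal (ltn_pmod i lN_gt0))).
move=> a b; rewrite (evalT_widen m a b (size_poly _ _)).
have [i hi [ea eb]] := crt_exists (ltn_ord a) (ltn_ord b).
have -> : a = Ordinal (ltn_pmod i k_gt0) by apply/val_inj; rewrite /= ea.
have -> : b = Ordinal (ltn_pmod i lN_gt0) by apply/val_inj; rewrite /= eb.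
by rewrite /= big_crt1 // coef_poly hi; congr (h _ _); apply: val_inj.
Qed.

Lemma evalT_ker p m N : @evalT R l k p m N =2 (fun _ _ => 0) ->
  exists Q, p = Q * ('X^(k * l ^ N) - 1).
Proof.
move=> p0; pose d : {poly R} := 'X^(k * l ^ N) - 1.
have kN_gt0 : (0 < k * l ^ N)%N by rewrite muln_gt0 k_gt0 expn_gt0 l_gt0.
have mon_d : d \is monic by rewrite monicXnsubC.
exists (Pdiv.Ring.rdivp p d).
have e := Pdiv.RingMonic.rdivp_eq mon_d p.
rewrite {1}e [Pdiv.Ring.rmodp _ _](_ : _ = 0) ?addr0 //.
apply: (@evalT_eq0 _ m N).
  have := Pdiv.CommonRing.ltn_rmodp p d.
  by rewrite monic_neq0 // size_XnsubC.
move=> a b; rewrite [Pdiv.Ring.rmodp _ _](_ : _ = p - Pdiv.Ring.rdivp p d * d).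
  by rewrite evalTB /= p0 evalT_mulXnsub1 subrr.
by rewrite {2}e addrAC subrr add0r.
Qed.

End EvalT.

Section EvalTNonZeroDivisor.
Variable R : comNzRingType.
Variables l k : nat.
Hypothesis pchar_l : l \in [pchar R].
Hypothesis k_gt0 : (0 < k)%N.
Hypothesis coprime_kl : coprime k l.
Hypothesis Rreduced : forall (x : R) n, x ^+ n = 0 -> x = 0.

Lemma redmul_evalT_eq0_proj (f : {poly R}) n : is_unit f`_0 ->
  exists2 N, (n <= N)%N & forall g : redfam R l k,
    @redmul R l k (@evalT R l k f 0) g N =2 (fun _ _ => 0) ->
    proj_level R l k N n (g N) =2 (fun _ _ => 0).
Proof.
move=> f0_unit; have l_gt0 : (0 < l)%N by rewrite prime_gt0 // (pcharf_prime pchar_l).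
have [N nN cancelN] := mul_Xnsub1_cancel pchar_l k_gt0 Rreduced n f0_unit.
exists N => // g fg0 a b.
have [H eH] := evalT_surj k_gt0 l_gt0 coprime_kl (g N) 0.
have fH0 : @evalT R l k (f * H) 0 N =2 (fun _ _ => 0).
  by move=> c1 c2; rewrite evalTM // (redmul_ext (fun _ _ => erefl) eH) fg0.
have [Q eQ] := evalT_ker k_gt0 l_gt0 coprime_kl fH0.
have [Q' eH'] := cancelN H Q eQ.
have -> : proj_level R l k N n (g N) a b = proj_level R l k N n (@evalT R l k H 0 N) a b.
  by apply: eq_bigr => b' _; rewrite eH.
by rewrite (proj_level_evalT l_gt0 H 0 0 nN) eH' evalT_mulXnsub1.
Qed.

End EvalTNonZeroDivisor.

Section JacobsonQuotient.
Variable Omega : comNzRingType.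

Definition jacb (x : Omega) : bool :=
  if excluded_middle_informative (jac x) then true else false.

Lemma jacbP x : reflect (jac x) (jacb x).
Proof. by rewrite /jacb; case: excluded_middle_informative => h; constructor. Qed.

Lemma is_unitM (a b : Omega) : is_unit a -> is_unit b -> is_unit (a * b).
Proof. by move=> [u hu] [v hv]; exists (v * u); rewrite -mulrA (mulrA u) hu mul1r hv. Qed.

Lemma jac_idealr_closed : idealr_closed (jacb : {pred Omega}).
Proof.
split.
- by apply/jacbP => y; exists 1; rewrite mul0r subr0 mulr1.
- by apply/jacbP => /(_ 1) [y]; rewrite mulr1 subrr mulr0 => /esym/eqP; rewrite oner_eq0.
move=> a x y /jacbP jx /jacbP jy; apply/jacbP => z.
have [w hw] := jy z.
(* [w] inverts [1 - y z], so [1 - (a x + y) z = (1 - y z) (1 - x (a z w))]. *)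
have -> : 1 - (a * x + y) * z = (1 - y * z) * (1 - x * (a * z * w)).
  have -> : (1 - y * z) * (1 - x * (a * z * w)) = 1 - y * z - x * a * z * (w * (1 - y * z)).
    by ring.
  by rewrite hw mulr1; ring.
exact: is_unitM (jy z) (jx _).
Qed.

HB.instance Definition _ := isIdealr.Build Omega (jacb : {pred Omega}) jac_idealr_closed.

Definition Jquot := {ideal_quot (jacb : {pred Omega})}.
Definition piJ : {rmorphism Omega -> Jquot} := (\pi_Jquot)%qT.

Lemma piJ_eq0P x : reflect (jac x) (piJ x == 0).
Proof.
rewrite /piJ /= -pi_zeror piE Quotient.equivE subr0; exact: jacbP.
Qed.

Lemma jac_expr (x : Omega) n : jac (x ^+ n) -> jac x.
Proof.
move=> jxn y; have [u hu] := jxn (y ^+ n).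
exists (u * \sum_(i < n) (x * y) ^+ i).
have telescope : 1 - (x * y) ^+ n = (1 - x * y) * \sum_(i < n) (x * y) ^+ i.
  by rewrite -opprB subrX1 -mulNr opprB.
by rewrite -mulrA -(mulrC (1 - x * y)) -telescope exprMn.
Qed.

Lemma Jquot_reduced (x : Jquot) n : x ^+ n = 0 -> x = 0.
Proof.
rewrite -[x]reprK => xn0; apply/eqP/piJ_eq0P/(@jac_expr _ n)/piJ_eq0P.
by rewrite rmorphXn /= xn0.
Qed.

Lemma pchar_Jquot l : prime l -> Zl_algebra Omega l -> l \in [pchar Jquot].
Proof. by move=> l_prime jl; rewrite inE l_prime -(rmorph_nat piJ); apply/piJ_eq0P. Qed.

End JacobsonQuotient.

Section MapEvalT.
Variables (A B : comNzRingType) (phi : {rmorphism A -> B}) (l k : nat).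

Lemma evalT_map (f : {poly A}) m N :
  @evalT B l k (map_poly phi f) m N =2 (fun a b => phi (@evalT A l k f m N a b)).
Proof.
move=> a b; have size_f : (size (map_poly phi f) <= size f)%N.
  by rewrite map_polyE (leq_trans (size_Poly _)) // size_map.
rewrite (evalT_widen m a b size_f) /evalT rmorph_sum.
by apply: eq_bigr => i _; rewrite coef_map.
Qed.

Lemma redmul_map (g h : redfam A l k) N c1 c2 :
  phi (@redmul A l k g h N c1 c2) =
  @redmul B l k (fun n a b => phi (g n a b)) (fun n a b => phi (h n a b)) N c1 c2.
Proof.
rewrite /redmul !rmorph_sum; apply: eq_bigr => ? _; rewrite rmorph_sum.
apply: eq_bigr => ? _; rewrite rmorph_sum; apply: eq_bigr => ? _; rewrite rmorph_sum.
by apply: eq_bigr => ? _; rewrite rmorphM.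
Qed.

End MapEvalT.

Theorem lemma8p5 (Omega : comNzRingType) (l k : nat)
  (hl : prime l) (hk : (0 < k)%N) (hkl : coprime k l)
  (hadic : adic Omega) (hZl : Zl_algebra Omega l)
  (f : {poly Omega}) (hf : inP f) :
  @inS Omega l k (@evalT Omega l k f).
Proof.
split; first exact: evalT_in_OG (prime_gt0 hl) f.
move=> h h_in fh0 n a b.
pose pi := piJ Omega; pose pih : redfam (Jquot Omega) l k := fun n a b => pi (h n a b).
have pif0_unit : is_unit (map_poly pi f)`_0.
  by case: hf => y hy; exists (pi y); rewrite coef_map -rmorphM hy rmorph1.
have [N nN proj0] :=
  redmul_evalT_eq0_proj (pchar_Jquot hl hZl) hk hkl (@Jquot_reduced Omega) n pif0_unit.
have pih_proj0 : proj_level _ l k N n (pih N) a b = 0.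
  apply: proj0 => c1 c2.
  rewrite (redmul_ext (g' := fun n a b => pi (@evalT _ l k f 0 n a b))
    (evalT_map pi f 0 (N := N)) (fun _ _ => erefl)).
  by rewrite -redmul_map; apply/eqP/piJ_eq0P/fh0.
apply/piJ_eq0P/eqP; rewrite -[h n a b](subrK (proj_level _ l k N n (h N) a b)) rmorphD.
move: pih_proj0; rewrite /proj_level -rmorph_sum => ->.
by rewrite addr0; apply/eqP/piJ_eq0P/h_in.
Qed.
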